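(* Let $n\geq 2$ and $k\geq 3$. If $c$ is an exact $k$-coloring of $\mathcal{B}_n$ with no rainbow induced copy of $\mathcal{C}_3$, then $k\leq \binom{n}{\lceil n/2\rceil}+1$.
   Context: $\mathcal{B}_n$ denotes the Boolean lattice of all subsets of $[n]$ ordered by inclusion. An exact $k$-coloring of $\mathcal{B}_n$ is a surjective map $\mathcal{B}_n\to[k]$. A rainbow induced copy of $\mathcal{C}_3$ is a chain $X\subsetneq Y\subsetneq Z$ whose three sets have pairwise distinct colors. *)

From mathcomp Require Import all_boot all_order.
Set Implicit Arguments. Unset Strict Implicit. Unset Printing Implicit Defensive.

(* The Boolean lattice B_n is modelled as {set 'I_n} ordered by inclusion.
   An exact k-coloring is a surjective map {set 'I_n} -> 'I_k. *)
Definition exact_coloring (n k : nat) (c : {set 'I_n} -> 'I_k) : Prop :=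
  forall i : 'I_k, exists X : {set 'I_n}, c X = i.

Definition rainbow_C3 (n k : nat) (c : {set 'I_n} -> 'I_k)
  (X Y Z : {set 'I_n}) : Prop :=
  [/\ X \proper Y, Y \proper Z,
      c X != c Y, c Y != c Z & c X != c Z].

Definition no_rainbow_C3 (n k : nat) (c : {set 'I_n} -> 'I_k) : Prop :=
  forall X Y Z : {set 'I_n}, ~ rainbow_C3 c X Y Z.

Definition ceil_half (n : nat) : nat := n.+1./2.

(* Fix one representative set of each color other than the color of the empty
   set.  Two comparable representatives, together with the empty set below them,
   would form a rainbow chain, so the representatives form an antichain of size
   k - 1, and Sperner's theorem bounds it by the middle binomial coefficient.
   Sperner's theorem is proved by the LYM double counting of maximal chains. *)

From mathcomp Require Import all_boot all_order.
From mathcomp Require Import zify.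

Set Implicit Arguments.
Unset Strict Implicit.
Unset Printing Implicit Defensive.

Lemma leq_bin_binS n m : m.*2 < n -> 'C(n, m) <= 'C(n, m.+1).
Proof.
move=> lt_2m_n; rewrite -(leq_pmul2l (ltn0Sn m)) mul_bin_left leq_mul2r.
by apply/orP; right; lia.
Qed.

Lemma leq_binS_bin n m : n <= m.*2.+1 -> 'C(n, m.+1) <= 'C(n, m).
Proof.
move=> le_n_2m; rewrite -(leq_pmul2l (ltn0Sn m)) mul_bin_left leq_mul2r.
by apply/orP; right; lia.
Qed.

Lemma leq_bin_half n m : 'C(n, m) <= 'C(n, n.+1./2).
Proof.
set h := n.+1./2.
have h_le : h.*2 <= n.+1 by rewrite -[n.+1 in X in _ <= X]odd_double_half; lia.
have h_ge : n <= h.*2.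
  by move: (odd_double_half n.+1); rewrite -/h; case: odd => /=; lia.
have [le_mh | lt_hm] := leqP m h.
  pose D := [pred i | i <= h].
  have incr : {in D &, {homo binomial n : i j / i <= j}}.
    apply: homo_leq_in => [//|y x z|i j _ jD l /andP [_ lt_lj]|i _].
    - exact: leq_trans.
    - exact: leq_trans (ltnW lt_lj) jD.
    - by rewrite !inE => iSD; apply: leq_bin_binS; lia.
  by apply: incr; rewrite ?inE.
pose D := [pred i | h <= i].
have decr : {in D &, {homo binomial n : i j / i <= j >-> j <= i}}.
  apply: homo_leq_in => [//|y x z le_yx le_zy|i j iD _ l /andP [lt_il _]|i].
  - exact: leq_trans le_zy le_yx.
  - exact: leq_trans iD (ltnW lt_il).
  - by rewrite !inE => iD _; apply: leq_binS_bin; lia.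
by apply: decr; rewrite ?inE // ltnW.
Qed.

Definition antichain (T : finType) (F : {set {set T}}) : Prop :=
  {in F &, forall A B : {set T}, A \subset B -> A = B}.

(* Both sides count the maximal chains of subsets of [S] through [A]; the right
   side sorts them by the element [x] such that [S :\ x] is the chain's
   second-largest set. *)
Lemma chains_through_proper (T : finType) (A S : {set T}) : A \proper S ->
  #|A|`! * (#|S| - #|A|)`! = \sum_(x in S :\: A) #|A|`! * (#|S :\ x| - #|A|)`!.
Proof.
move=> ltAS; have sAS := proper_sub ltAS.
have [d card_SA] : exists d, #|S| - #|A| = d.+1.
  by exists (#|S| - #|A|).-1; move: (proper_card ltAS); lia.
rewrite (eq_bigr (fun _ => #|A|`! * d`!)) => [|x]; last first.
  rewrite inE => /andP [_ xS]; congr (_ * _`!).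
  by move: (cardsD1 x S); rewrite xS; lia.
by rewrite sum_nat_const cardsD (setIidPr sAS) card_SA factS mulnCA.
Qed.

Section LYM.
Variables (T : finType) (F : {set {set T}}).
Hypothesis F_antichain : antichain F.

(* The number of pairs (A, C) with A in F and C a maximal chain of subsets of S
   passing through A. *)
Definition chain_count (S : {set T}) : nat :=
  \sum_(A in F | A \subset S) #|A|`! * (#|S| - #|A|)`!.

Lemma chain_count_member S : S \in F -> chain_count S = #|S|`!.
Proof.
move=> SF; rewrite /chain_count (bigD1 S) /=; last by rewrite SF subxx.
rewrite big1 ?addn0; first by rewrite subnn muln1.
by move=> A /andP [/andP [AF sAS] neAS]; case/eqP: neAS; apply: F_antichain.
Qed.

Lemma chain_count_split S :
  S \notin F -> chain_count S = \sum_(x in S) chain_count (S :\ x).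
Proof.
move=> SF; rewrite /chain_count.
rewrite (eq_bigr (fun A =>
    \sum_(x in S :\: A) #|A|`! * (#|S :\ x| - #|A|)`!)); last first.
  move=> A /andP [AF sAS]; apply: chains_through_proper.
  by rewrite properEneq sAS andbT; apply: contraNneq SF => <-.
rewrite (exchange_big_dep (fun x => x \in S)) => [|A x _]; last first.
  by rewrite inE => /andP [].
apply: eq_bigr => x xS; apply: eq_bigl => A.
by rewrite subsetD1 !inE xS andbT andbA.
Qed.

Lemma chain_count_le S : chain_count S <= #|S|`!.
Proof.
have [m] := ubnP #|S|; elim: m S => // m IH S lt_S_m.
have [SF | SF] := boolP (S \in F); first by rewrite chain_count_member.
rewrite chain_count_split //.
apply: (@leq_trans (\sum_(x in S) #|S|.-1`!)).
  apply: leq_sum => x xS.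
  have card_S : #|S| = #|S :\ x|.+1 by rewrite (cardsD1 x S) xS.
  by rewrite card_S IH // -ltnS -card_S.
by rewrite sum_nat_const; case: #|S|.
Qed.

Theorem sperner : #|F| <= 'C(#|T|, #|T|.+1./2).
Proof.
rewrite -(leq_pmul2r (fact_gt0 #|T|)).
apply: (@leq_trans ('C(#|T|, #|T|.+1./2) * chain_count [set: T])); last first.
  by rewrite leq_mul2l -[X in _ <= X`!]cardsT chain_count_le orbT.
rewrite /chain_count big_distrr /= -sum_nat_const.
rewrite [leqRHS](eq_bigl (fun A => A \in F)) => [|A]; last first.
  by rewrite subsetT andbT.
apply: leq_sum => A _.
by rewrite cardsT -(bin_fact (max_card A)) leq_mul2r leq_bin_half orbT.
Qed.

End LYM.

Lemma rainbow_free_antichain n k (c : {set 'I_n} -> 'I_k) (F : {set {set 'I_n}}) :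
  no_rainbow_C3 c -> {in F &, injective c} ->
  {in F, forall A, c A != c set0} -> antichain F.
Proof.
move=> norainbow c_inj c_ne0 A B AF BF sAB.
have [// | neAB] := eqVneq A B; exfalso.
apply: (norainbow set0 A B); split.
- by rewrite proper0; apply: contraNneq (c_ne0 A AF) => ->.
- by rewrite properEneq neAB.
- by rewrite eq_sym c_ne0.
- by apply: contra_neq neAB; apply: c_inj.
- by rewrite eq_sym c_ne0.
Qed.

Theorem corollary2p2 (n k : nat) (c : {set 'I_n} -> 'I_k) :
  2 <= n -> 3 <= k -> exact_coloring c -> no_rainbow_C3 c ->
  k <= 'C(n, ceil_half n) + 1.
Proof.
move=> _ _ surj norainbow.
have [rep repK] := fin_all_exists surj.
pose F := rep @: [set~ c set0].
have rep_inj : injective rep by apply: can_inj repK.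
have F_antichain : antichain F.
  apply: (rainbow_free_antichain norainbow).
    by move=> _ _ /imsetP [i _ ->] /imsetP [j _ ->]; rewrite !repK => ->.
  by move=> _ /imsetP [i i_ne0 ->]; rewrite repK -in_setC1.
have := sperner F_antichain.
by rewrite card_imset // cardsC1 !card_ord /ceil_half; lia.
Qed.
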